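(* Let $A=\{0,1\}$, $n\ge 1$, and let $\rho\subseteq A^n$ with $\rho\neq A^n$. Then $\rho$ is a key relation if and only if there exist linear equations $L_1,\dots,L_m$ ($m\ge 1$), each of the form $c_1x_1+\dots+c_nx_n=c_0$ with $c_0,\dots,c_n\in\{0,1\}$ and addition modulo $2$, such that $\rho=\{(x_1,\dots,x_n)\in A^n : \text{at least one of } L_1,\dots,L_m \text{ holds}\}$, i.e. $\rho(x_1,\dots,x_n)=L_1\vee\dots\vee L_m$.
   Context: A relation of arity $n$ on a finite set $A$ is a subset $\rho\subseteq A^n$. A unary vector-function is a tuple $\Psi=(\psi_1,\dots,\psi_n)$ of maps $\psi_i:A\to A$, acting on tuples coordinatewise: $\Psi(a_1,\dots,a_n)=(\psi_1(a_1),\dots,\psi_n(a_n))$; $\Psi$ preserves $\rho$ if $\Psi(\alpha)\in\rho$ for all $\alpha\in\rho$. A relation $\rho\subseteq A^n$ is a key relation if there is a tuple $\beta\in A^n\setminus\rho$ (called a key tuple for $\rho$) such that for every $\alpha\in A^n\setminus\rho$ there exists a unary vector-function $\Psi$ preserving $\rho$ with $\Psi(\alpha)=\beta$. *)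

(* A = {0,1} is modelled by bool (false = 0, true = 1). *)
From mathcomp Require Import all_boot.
Set Implicit Arguments. Unset Strict Implicit. Unset Printing Implicit Defensive.

Definition tup (A : finType) (n : nat) := {ffun 'I_n -> A}.

Definition relation (A : finType) (n : nat) := {set tup A n}.

Definition vecfun (A : finType) (n : nat) := 'I_n -> A -> A.

Definition vapply (A : finType) (n : nat) (Psi : vecfun A n) (a : tup A n) : tup A n :=
  [ffun i => Psi i (a i)].

Definition preserves (A : finType) (n : nat) (Psi : vecfun A n) (rho : relation A n) : Prop :=
  forall a, a \in rho -> vapply Psi a \in rho.

Definition key_tuple (A : finType) (n : nat) (rho : relation A n) (b : tup A n) : Prop :=
  b \notin rho /\
  forall a, a \notin rho -> exists Psi : vecfun A n, preserves Psi rho /\ vapply Psi a = b.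

Definition key_relation (A : finType) (n : nat) (rho : relation A n) : Prop :=
  exists b, key_tuple rho b.

(* A linear equation c_1 x_1 + ... + c_n x_n = c_0 over GF(2),
   given by the coefficient tuple (c_1..c_n) and the constant c_0. *)
Definition lineq (n : nat) : Type := (tup bool n * bool)%type.

Definition lineq_holds (n : nat) (L : lineq n) (x : tup bool n) : bool :=
  (\big[addb/false]_(i < n) (L.1 i && x i)) == L.2.

From mathcomp Require Import all_boot all_algebra.
Set Implicit Arguments. Unset Strict Implicit. Unset Printing Implicit Defensive.
Import GRing.Theory.

(* Pick a tuple [b] outside [rho] and put [C := {x | x + b \notin rho}], so that [0 \in C].
   A coordinatewise map of [bool^n] sending [a] to [0] has the form [w |-> m * (w + a)]
   for a mask [m], so [rho] being a key relation with key tuple [b] says that for each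
   [a \in C] some such masked translation maps only points of [C] into [C].  This forces
   [C] to be a subspace of [GF(2)^n]: by induction on [n], the slice of [C] at last
   coordinate [1] is empty or a coset of the slice at [0], which is a subspace by the
   induction hypothesis.  A subspace is the common kernel of finitely many linear forms
   [c], hence [rho] is the set of [x] satisfying one of the equations [c.x = 1 + c.b].
   Conversely, if [rho] is a disjunction of linear equations and [a, b \notin rho], each
   equation fails at both [a] and [b], so the translation by [a + b] preserves [rho] and
   maps [a] to [b]. *)

Open Scope ring_scope.

Lemma tup_addxx n (x : tup bool n) : x + x = 0.
Proof. by apply/ffunP => i; rewrite !ffunE; case: (x i). Qed.

Lemma tup_addKl n (x y : tup bool n) : x + (x + y) = y.
Proof. by rewrite addrA tup_addxx add0r. Qed.

Lemma tup_addKr n (x y : tup bool n) : x + y + y = x.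
Proof. by rewrite -addrA tup_addxx addr0. Qed.

Lemma tup_mulxx n (x : tup bool n) : x * x = x.
Proof. by apply/ffunP => i; rewrite !ffunE; case: (x i). Qed.

Lemma tup0 (x : tup bool 0) : x = 0.
Proof. by apply/ffunP => -[]. Qed.

Definition dot n (c x : tup bool n) : bool := \sum_(i < n) c i * x i.

Lemma lineq_holdsE n (L : lineq n) x : lineq_holds L x = (dot L.1 x == L.2).
Proof. by []. Qed.

Lemma dotDr n (c x y : tup bool n) : dot c (x + y) = dot c x + dot c y.
Proof. by rewrite /dot -big_split; apply: eq_bigr => i _; rewrite ffunE mulrDr. Qed.

Lemma dot0l n (x : tup bool n) : dot 0 x = 0.
Proof. by rewrite /dot big1 // => i _; rewrite ffunE mul0r. Qed.

Definition ext n (v : tup bool n) (t : bool) : tup bool n.+1 :=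
  [ffun i => if unlift ord_max i is Some j then v j else t].

Lemma ext_lift n (v : tup bool n) t j : ext v t (lift ord_max j) = v j.
Proof. by rewrite ffunE liftK. Qed.

Lemma ext_max n (v : tup bool n) t : ext v t ord_max = t.
Proof. by rewrite ffunE unlift_none. Qed.

Lemma ext_eq n (v : tup bool n) t (f : tup bool n.+1) :
  (forall j, f (lift ord_max j) = v j) -> f ord_max = t -> f = ext v t.
Proof.
move=> fv ft; apply/ffunP => i.
by case: (unliftP ord_max i) => [j|] ->; rewrite ?ext_lift ?ext_max.
Qed.

Lemma tupS_ext n (w : tup bool n.+1) : exists v t, w = ext v t.
Proof.
by exists [ffun j => w (lift ord_max j)], (w ord_max); apply: ext_eq => *; rewrite ?ffunE.
Qed.

Lemma ext0 n : ext (0 : tup bool n) 0 = 0.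
Proof. by symmetry; apply: ext_eq => *; rewrite !ffunE. Qed.

Lemma extD n (v v' : tup bool n) t t' : ext v t + ext v' t' = ext (v + v') (t + t').
Proof. by apply: ext_eq => *; rewrite !ffunE ?liftK ?unlift_none. Qed.

Lemma extM n (v v' : tup bool n) t t' : ext v t * ext v' t' = ext (v * v') (t * t').
Proof. by apply: ext_eq => *; rewrite !ffunE ?liftK ?unlift_none. Qed.

Lemma dot_ext n (c v : tup bool n) s t : dot (ext c s) (ext v t) = dot c v + s * t.
Proof.
rewrite /dot big_ord_recr /= !ext_max; congr (_ + _); apply: eq_bigr => i _.
have -> : widen_ord (leqnSn n) i = lift ord_max i.
  by apply: val_inj; rewrite /= /bump leqNgt ltn_ord.
by rewrite !ext_lift.
Qed.

Definition key_pred n (C : pred (tup bool n)) :=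
  forall a, C a -> exists m : tup bool n, forall w : tup bool n, C (m * (w + a)) -> C w.

Definition add_closed n (C : pred (tup bool n)) := forall x y, C x -> C y -> C (x + y).

Lemma key_pred_ext n (C : pred (tup bool n.+1)) u t : key_pred C -> C (ext u t) ->
  exists (m : tup bool n) mu,
    forall (w : tup bool n) s, C (ext (m * (w + u)) (mu * (s + t))) -> C (ext w s).
Proof.
move=> keyC /keyC [m' reflC]; case: (tupS_ext m') reflC => m [mu ->] reflC.
by exists m, mu => w s; rewrite -extM -extD; apply: (reflC).
Qed.

Lemma key_pred_slice0 n (C : pred (tup bool n.+1)) :
  key_pred C -> key_pred (fun v => C (ext v false)).
Proof.
move=> keyC a /(key_pred_ext keyC) [m [mu reflC]].
by exists m => w Cw; apply: (reflC); rewrite addr0 mulr0.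
Qed.

Section LastCoordinateSlices.

Variables (n : nat) (C : pred (tup bool n.+1)).
Hypotheses (keyC : key_pred C) (C0 : C 0).
Local Notation low v := (C (ext v false)).
Local Notation high v := (C (ext v true)).
Hypothesis lowD : forall x y, low x -> low y -> low (x + y).

Local Notation reflecting_mask u m mu :=
  (forall (w : tup bool n) s, C (ext (m * (w + u)) (mu && ~~ s)) -> C (ext w s)).

Lemma high_key (u : tup bool n) : high u -> exists m mu, reflecting_mask u m mu.
Proof.
move=> /(key_pred_ext keyC) [m [mu reflC]]; exists m, mu => w s.
by rewrite -addbT; apply: (reflC).
Qed.

Lemma low0 : low 0.
Proof. by rewrite ext0. Qed.

Lemma low_kernel (u m : tup bool n) mu (z : tup bool n) :
  reflecting_mask u m mu -> m * z = 0 -> low z.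
Proof.
case: mu => reflC mz0.
  have hmu : high (m * u).
    by apply: (reflC); rewrite mulrDr mulrA tup_mulxx tup_addxx low0.
  by apply: (reflC); rewrite mulrDr mz0 add0r.
have lowu : low u by apply: (reflC); rewrite tup_addxx mulr0 low0.
rewrite -(tup_addKl u z); apply: lowD => //.
by apply: (reflC); rewrite addrC tup_addKl mz0 low0.
Qed.

Lemma low_mask (u m : tup bool n) mu (y : tup bool n) :
  reflecting_mask u m mu -> low y -> low (m * y).
Proof.
move=> reflC lowy; rewrite -(tup_addKl y (m * y)); apply: lowD => //.
by apply: (low_kernel reflC); rewrite mulrDr mulrA tup_mulxx tup_addxx.
Qed.

Lemma low_of_ext0 (u m : tup bool n) mu : reflecting_mask u m mu -> C (ext 0 mu) -> low u.
Proof. by move=> reflC C0mu; apply: (reflC); rewrite tup_addxx mulr0 andbT. Qed.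

Lemma low_sub_high (u m c : tup bool n) : reflecting_mask u m false -> low c -> high c.
Proof.
move=> reflC lowc; apply: (reflC); rewrite mulrDr.
by apply: lowD; apply: (low_mask reflC) => //; apply: (low_of_ext0 reflC); apply: low0.
Qed.

Lemma high_translate (u m c : tup bool n) : reflecting_mask u m true -> low c -> high (c + u).
Proof. by move=> reflC lowc; apply: (reflC); rewrite tup_addKr (low_mask reflC). Qed.

Lemma high_eq_low (u m : tup bool n) : reflecting_mask u m false -> forall v, high v = low v.
Proof.
move=> reflU v; apply/idP/idP => [/high_key [m' [mu' reflV]] | ].
  apply: (low_of_ext0 reflV); case: mu' {reflV}; last exact: low0.
  exact: (low_sub_high reflU low0).
exact: (low_sub_high reflU).
Qed.

Lemma highDlow (u c : tup bool n) : high u -> low c -> high (c + u).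
Proof.
move=> hu lowc; have [m [[] reflU]] := high_key hu.
  exact: (high_translate reflU lowc).
by rewrite (high_eq_low reflU); apply: lowD => //; rewrite -(high_eq_low reflU).
Qed.

Lemma highDhigh (u v : tup bool n) : high u -> high v -> low (v + u).
Proof.
move=> hu hv; have [m [[] reflU]] := high_key hu; last first.
  by apply: lowD; rewrite -(high_eq_low reflU).
apply: (reflU _ false); rewrite tup_addKr.
have -> : m * v = v + m * v + v by rewrite [v + _]addrC tup_addKr.
apply: (highDlow hv); apply: (low_kernel reflU).
by rewrite mulrDr mulrA tup_mulxx tup_addxx.
Qed.

Lemma slices_add_closed : add_closed C.
Proof.
move=> x y; case: (tupS_ext x) (tupS_ext y) => v [s ->] [v' [s' ->]].
rewrite extD; case: s; case: s'.
- by move=> hv hv'; rewrite addrC; apply: highDhigh.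
- by move=> hv lowv'; rewrite addrC; apply: highDlow.
- by move=> lowv hv'; apply: highDlow.
- exact: lowD.
Qed.

End LastCoordinateSlices.

Lemma key_pred_add_closed n (C : pred (tup bool n)) : C 0 -> key_pred C -> add_closed C.
Proof.
elim: n C => [|n IHn] C C0 keyC.
  by move=> x y _ _; rewrite (tup0 (x + y)).
apply: slices_add_closed => //; apply: IHn; last exact: key_pred_slice0.
by rewrite /= ext0.
Qed.

Lemma add_closed_slice1 n (C : pred (tup bool n.+1)) u v : add_closed C ->
  C (ext u true) -> C (ext v true) = C (ext (v + u) false).
Proof.
move=> CD hu; apply/idP/idP => [hv | lowvu].
  by rewrite -[false]/(true + true) -extD; apply: CD.
by rewrite -(tup_addKr v u) -[true]/(false + true) -extD; apply: CD.
Qed.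

Lemma add_closed_kernel n (C : pred (tup bool n)) : C 0 -> add_closed C ->
  exists cs : seq (tup bool n), forall x, C x = all (fun c => dot c x == 0) cs.
Proof.
elim: n C => [|n IHn] C C0 CD.
  by exists [::] => x; rewrite (tup0 x) C0.
have low0 : C (ext 0 false) by rewrite ext0.
have lowD : add_closed (fun v => C (ext v false)).
  by move=> x y lowx lowy; rewrite /= -[false]/(false + false) -extD; apply: CD.
have [cs0 Hcs0] := IHn _ low0 lowD.
case: (pickP (fun u => C (ext u true))) => [u hu | high0].
  exists (map (fun c => ext c (dot c u)) cs0) => x; have [v [[] ->]] := tupS_ext x.
    rewrite (add_closed_slice1 _ CD hu) Hcs0 all_map; apply: eq_all => c /=.
    by rewrite dot_ext dotDr mulr1.
  by rewrite Hcs0 all_map; apply: eq_all => c /=; rewrite dot_ext mulr0 addr0.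
exists (ext 0 true :: map (fun c => ext c false) cs0) => x.
have [v [[] ->]] := tupS_ext x; rewrite /= dot_ext dot0l add0r.
  by rewrite high0.
by rewrite Hcs0 all_map; apply: eq_all => c /=; rewrite dot_ext mulr0 addr0.
Qed.

Lemma bool_fun_vanishing (f : bool -> bool) u :
  f u = 0 -> forall t, f t = f (~~ u) * (t + u).
Proof. by move=> fu t; case: t; case: u fu => /= fu; rewrite ?fu; case: (f _). Qed.

Lemma key_tuple_key_pred n (rho : relation bool n) b :
  key_tuple rho b -> key_pred (fun x => x + b \notin rho).
Proof.
move=> [_ keyb] a /keyb [Psi [Psi_rho Psi_ab]].
pose Phi i t := Psi i (t + b i) + b i.
have Phi_a i : Phi i (a i) = 0.
  by rewrite /Phi; move/ffunP/(_ i): Psi_ab; rewrite !ffunE => ->; case: (b i).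
exists [ffun i => Phi i (~~ a i)] => w; apply: contra => w_rho.
have -> : [ffun i => Phi i (~~ a i)] * (w + a) + b = vapply Psi (w + b).
  apply/ffunP => i; rewrite !ffunE -(bool_fun_vanishing (Phi_a i)) /Phi -addrA.
  by case: (b i); case: (Psi _ _).
exact: Psi_rho.
Qed.

(* The trivially false equation [0 = 1] only serves to make the list nonempty. *)
Lemma kernel_translate_lineqs n (rho : relation bool n) b (cs : seq (tup bool n)) :
  (forall x, (x + b \notin rho) = all (fun c => dot c x == 0) cs) ->
  rho = [set x | has (fun L => lineq_holds L x) (map (fun c => (c, ~~ dot c b)) (0 :: cs))].
Proof.
move=> rhoE; apply/setP => x; rewrite inE /= lineq_holdsE /= !dot0l /=.
rewrite -[x in x \in rho](tup_addKr x b) -[_ \in rho]negbK rhoE -has_predC has_map.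
apply: eq_has => c /=; rewrite lineq_holdsE dotDr.
by case: (dot c x); case: (dot c b).
Qed.

Lemma key_tuple_lineq_disjunction n (rho : relation bool n) b : key_tuple rho b ->
  exists Ls : seq (lineq n),
    (0 < size Ls)%N /\ rho = [set x | has (fun L => lineq_holds L x) Ls].
Proof.
move=> keyb; have C0 : (fun x => x + b \notin rho) 0 by rewrite /= add0r; case: keyb.
have C_add := key_pred_add_closed C0 (key_tuple_key_pred keyb).
have [cs rhoE] := add_closed_kernel C0 C_add.
by eexists; split; last exact: (kernel_translate_lineqs rhoE).
Qed.

Lemma lineq_holds_translate n (L : lineq n) a b x :
  ~~ lineq_holds L a -> ~~ lineq_holds L b -> lineq_holds L (x + (a + b)) = lineq_holds L x.
Proof.
rewrite !lineq_holdsE !dotDr.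
by case: (dot L.1 x); case: (dot L.1 a); case: (dot L.1 b); case: L.2.
Qed.

Lemma lineq_disjunction_key_tuple n (rho : relation bool n) (Ls : seq (lineq n)) b :
  rho = [set x | has (fun L => lineq_holds L x) Ls] -> b \notin rho -> key_tuple rho b.
Proof.
move=> rhoE b_notin; split=> // a; rewrite rhoE inE => /hasPn a_fails.
move: b_notin; rewrite rhoE inE => /hasPn b_fails.
exists (fun i t => t + (a i + b i)); split.
  move=> x; rewrite !inE => /hasP [L LLs HL]; apply/hasP; exists L => //.
  have -> : vapply (fun i t => t + (a i + b i)) x = x + (a + b).
    by apply/ffunP => i; rewrite !ffunE.
  by rewrite lineq_holds_translate ?a_fails ?b_fails.
by apply/ffunP => i; rewrite !ffunE; case: (a i); case: (b i).
Qed.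

Close Scope ring_scope.

Theorem mainTheorem1 (n : nat) (hn : 1 <= n) (rho : relation bool n)
  (hrho : rho != [set: tup bool n]) :
  key_relation rho <->
  exists Ls : seq (lineq n),
    0 < size Ls /\
    rho = [set x : tup bool n | has (fun L => lineq_holds L x) Ls].
Proof.
(* The argument also covers [n = 0]. *)
split=> [[b /key_tuple_lineq_disjunction //] | [Ls [_ rhoE]]].
have /subsetPn [b _ b_notin] : ~~ ([set: tup bool n] \subset rho) by rewrite subTset.
by exists b; apply: (lineq_disjunction_key_tuple rhoE b_notin).
Qed.
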